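(* Let $L$ be a finite connected simplicial complex of dimension $2$ (having at least one $2$-simplex) in which every edge is a face of at least two $2$-simplices, and suppose $\chi(L)\le 2$. Then $L$ has at least $\rho(\chi(L))$ vertices and at least $2\alpha_0(L)-2\chi(L)$ two-simplices, where $\alpha_0(L)$ is the number of vertices of $L$.
   Context: For an integer $k\le 2$, $\rho(k)=\left\lceil \frac{7+\sqrt{49-24k}}{2}\right\rceil$. $\alpha_i(L)$ denotes the number of $i$-simplices of $L$ and $\chi$ the Euler characteristic. *)

From Stdlib Require Import ZArith Reals.
From mathcomp Require Import all_boot.
Set Implicit Arguments. Unset Strict Implicit. Unset Printing Implicit Defensive.

Definition is_complex (T : finType) (L : {set {set T}}) : Prop :=
  forall s, s \in L -> s != set0 /\ (forall t : {set T}, t \subset s -> t != set0 -> t \in L).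

(* alpha_i(L) = number of i-simplices (simplices with i+1 vertices). *)
Definition alpha (T : finType) (L : {set {set T}}) (i : nat) : nat :=
  #|[set s in L | #|s| == i.+1]|.

Definition is_vertex (T : finType) (L : {set {set T}}) (v : T) : bool :=
  [set v] \in L.

Definition dim2 (T : finType) (L : {set {set T}}) : Prop :=
  (forall s, s \in L -> #|s| <= 3) /\ (exists s, s \in L /\ #|s| = 3).

Definition adj (T : finType) (L : {set {set T}}) : rel T :=
  fun u v => [set u; v] \in L.

(* L is connected: its 1-skeleton is connected (L nonempty is implied by dim2). *)
Definition connected_cx (T : finType) (L : {set {set T}}) : Prop :=
  forall u v, is_vertex L u -> is_vertex L v -> connect (adj L) u v.

Definition edges_in_two_triangles (T : finType) (L : {set {set T}}) : Prop :=
  forall e, e \in L -> #|e| = 2 ->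
    2 <= #|[set s in L | (#|s| == 3) && (e \subset s)]|.

(* Euler characteristic of a complex of dimension <= 2 (alternating sum of
   alpha_i over all dimensions; higher alpha_i vanish for such complexes,
   but we include dimensions up to #|T| to be fully general). *)
Definition euler_char (T : finType) (L : {set {set T}}) : Z :=
  \big[Z.add/0%Z]_(i < #|T|.+1) ((if odd i then (-1)%Z else 1%Z) * Z.of_nat (alpha L i))%Z.

(* rho(k) = ceil((7 + sqrt(49 - 24k))/2); ceiling x = - floor(-x), floor = Int_part. *)
Definition rho (k : Z) : Z :=
  (- Int_part (- ((7 + sqrt (49 - 24 * IZR k)) / 2)))%Z.

From Stdlib Require Import ZArith Reals Lia Lra.
From mathcomp Require Import all_boot zify.

(* Write n, e, f for the numbers of vertices, edges and
   triangles of L.  Three counting facts hold: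
   - n - e + f is the Euler characteristic, since no simplex has more than
     three vertices (every higher alpha_i vanishes);
   - 2e <= n(n-1): every edge is a 2-subset of the vertex set;
   - 2e <= 3f: double counting edge/triangle incidences, each edge lies in at
     least two triangles and each triangle has exactly three edges;
   moreover n >= 4, because a triangle and a second triangle sharing one of
   its edges already span four vertices.  Hence f >= 2n - 2chi directly, and
   6chi >= 6n - 2e >= 6n - n(n-1), i.e. (2n-7)^2 >= 49 - 24chi, which for
   2n >= 7 means n >= (7 + sqrt(49 - 24chi))/2, i.e. n >= rho(chi). *)

Lemma card_filter_sum {U : finType} (A : {set U}) (P : pred U) :
  #|[set x in A | P x]| = \sum_(x in A) (P x : nat).
Proof.
rewrite -sum1_card [RHS](eq_bigr (fun x => if P x then 1 else 0)).
  by rewrite -big_mkcondr; apply: eq_bigl => x; rewrite inE.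
by move=> x _; case: (P x).
Qed.

Lemma incidence_double_count {U V : finType} (A : {set U}) (B : {set V})
    (R : U -> V -> bool) :
  \sum_(x in A) #|[set y in B | R x y]| = \sum_(y in B) #|[set x in A | R x y]|.
Proof.
under eq_bigr do rewrite card_filter_sum.
by rewrite exchange_big; apply: eq_bigr => y _; rewrite card_filter_sum.
Qed.

Lemma card_setU_distinct3 {U : finType} {s t : {set U}} :
  #|s| = 3 -> #|t| = 3 -> s != t -> 4 <= #|s :|: t|.
Proof.
move=> s3 t3 neq_st.
have st_lt3 : #|s :&: t| < 3.
  rewrite ltn_neqAle -{2}s3 subset_leq_card ?subsetIl // andbT.
  apply: contra neq_st => /eqP st3.
  have sIt : s :&: t = s by apply/eqP; rewrite eqEcard subsetIl st3 s3.
  have s_sub_t : s \subset t by rewrite -sIt subsetIr.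
  by rewrite eqEcard s_sub_t s3 t3.
by have := cardsUI s t; rewrite s3 t3; lia.
Qed.

Lemma bigZ_trunc (m n : nat) (g : nat -> Z) :
  (forall i, m <= i -> g i = 0%Z) -> (forall i, n <= i -> g i = 0%Z) ->
  \big[Z.add/0%Z]_(i < m) g i = \big[Z.add/0%Z]_(i < n) g i.
Proof.
have sum0 k (h : nat -> Z) : (forall i, h i = 0%Z) -> \big[Z.add/0%Z]_(i < k) h i = 0%Z.
  elim: k h => [|k IHk] h h0; first by rewrite big_ord0.
  by rewrite big_ord_recl (IHk (fun i => h i.+1)) ?h0.
elim: m n g => [|m IHm] [|n] g gm gn; rewrite ?big_ord0.
- by [].
- by rewrite sum0 // => i; apply: gm.
- by rewrite sum0 // => i; apply: gn.
rewrite !big_ord_recl (IHm n (fun i => g i.+1)) => [//|i ?|i ?].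
- by apply: gm; rewrite ltnS.
- by apply: gn; rewrite ltnS.
Qed.

Section SimplicialComplex.

Context {T : finType} {L : {set {set T}}}.

Lemma alpha_eq0 (i : nat) : (forall s, s \in L -> #|s| <= i) -> alpha L i = 0.
Proof.
move=> small; apply/eqP; rewrite cards_eq0; apply/eqP/setP => s.
rewrite !inE; apply/negbTE/andP => -[sL /eqP si].
by have := small s sL; rewrite si ltnn.
Qed.

Lemma euler_char_dim_le2 :
  (forall s, s \in L -> #|s| <= 3) ->
  euler_char L = (Z.of_nat (alpha L 0) - Z.of_nat (alpha L 1) + Z.of_nat (alpha L 2))%Z.
Proof.
move=> dimL.
pose term i := ((if odd i then (-1)%Z else 1%Z) * Z.of_nat (alpha L i))%Z.
have term0 k : (forall s, s \in L -> #|s| <= k) -> forall i, k <= i -> term i = 0%Z.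
  move=> small i ki; rewrite /term alpha_eq0 ?Z.mul_0_r // => s sL.
  exact: leq_trans (small s sL) ki.
rewrite /euler_char (@bigZ_trunc _ 3 term).
- rewrite !big_ord_recl big_ord0 /term; cbn -[alpha Z.of_nat Z.mul Z.add].
  change (bump 0 0) with 1; change (bump 0 1) with 2.
  by cbn -[alpha Z.of_nat Z.mul Z.add]; lia.
- by apply: term0 => s _; rewrite ltnW // ltnS max_card.
- exact: term0.
Qed.

Hypothesis cxL : is_complex L.

Definition vertices : {set T} := [set v | is_vertex L v].

Lemma alpha0_vertices : alpha L 0 = #|vertices|.
Proof.
rewrite /alpha -(card_imset _ (@set1_inj T)).
suff -> : [set s in L | #|s| == 1] = [set [set v] | v in vertices] by [].
apply/setP => s; rewrite inE; apply/andP/imsetP => [[sL /cards1P [v sv]] | [v vL ->]].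
- by exists v; rewrite // inE /is_vertex -sv.
- by rewrite inE in vL; rewrite cards1.
Qed.

Lemma simplex_sub_vertices (s : {set T}) : s \in L -> s \subset vertices.
Proof.
move=> sL; apply/subsetP => v vs; rewrite inE.
apply: (proj2 (cxL _ sL)); first by rewrite sub1set.
by apply/set0Pn; exists v; rewrite inE.
Qed.

(* Edges are 2-subsets of the vertex set, so 2 alpha_1 <= n (n - 1). *)
Lemma edges_vertices_bound : 2 * alpha L 1 <= alpha L 0 * (alpha L 0).-1.
Proof.
have edges_draws : alpha L 1 <= 'C(#|vertices|, 2).
  rewrite -cards_draws; apply: subset_leq_card; apply/subsetP => s.
  by rewrite !inE => /andP [sL ->]; rewrite simplex_sub_vertices.
rewrite alpha0_vertices; apply: leq_trans (leq_mul (leqnn 2) edges_draws) _.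
by rewrite bin2 mul2n -[X in _ <= X]odd_double_half leq_addl.
Qed.

Lemma triangle_edges (t : {set T}) : t \in L -> #|t| = 3 ->
  #|[set e in [set s in L | #|s| == 2] | e \subset t]| = 3.
Proof.
move=> tL t3; rewrite -[3]/'C(3, 2) -t3 -cards_draws.
suff -> : [set e in [set s in L | #|s| == 2] | e \subset t] =
  [set e : {set T} | e \subset t & #|e| == 2] by [].
apply/setP => e; rewrite !inE andbAC -andbA; apply: andb_idl => /andP [et /eqP e2].
apply: (proj2 (cxL _ tL)) => //; by rewrite -card_gt0 e2.
Qed.

Hypothesis edge2L : edges_in_two_triangles L.

(* Double counting edge/triangle incidences: 2 alpha_1 <= 3 alpha_2. *)
Lemma edges_triangles_bound : 2 * alpha L 1 <= 3 * alpha L 2.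
Proof.
set E := [set s in L | #|s| == 2]; set F := [set s in L | #|s| == 3].
have edges_side : 2 * #|E| <= \sum_(e in E) #|[set t in F | e \subset t]|.
  rewrite -sum1_card big_distrr /= leq_sum // => e; rewrite inE => /andP [eL /eqP e2].
  rewrite muln1; apply: leq_trans (edge2L _ eL e2) _.
  by apply: subset_leq_card; apply/subsetP => t; rewrite !inE andbA.
have triangles_side : \sum_(t in F) #|[set e in E | e \subset t]| = 3 * #|F|.
  rewrite -sum1_card big_distrr /=; apply: eq_bigr => t; rewrite inE => /andP [tL /eqP t3].
  by rewrite muln1 triangle_edges.
change (2 * #|E| <= 3 * #|F|); rewrite -triangles_side.
by rewrite -(incidence_double_count E F (fun e t => e \subset t)).
Qed.

(* If moreover L contains a triangle, it has at least four vertices: the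
   triangle and a second triangle through one of its edges span four. *)
Lemma four_vertices : dim2 L -> 4 <= alpha L 0.
Proof.
move=> [_ [s [sL s3]]].
have [v vs] : exists v, v \in s by apply/set0Pn; rewrite -card_gt0 s3.
have e2 : #|s :\ v| = 2 by move: (cardsD1 v s); rewrite vs s3; lia.
have eL : s :\ v \in L.
  by apply: (proj2 (cxL _ sL)); rewrite ?subsetDl // -card_gt0 e2.
set A := [set u in L | (#|u| == 3) && (s :\ v \subset u)].
have sA : s \in A by rewrite inE sL s3 eqxx subsetDl.
have [t] : exists t, t \in A :\ s.
  apply/set0Pn; rewrite -card_gt0.
  by move: (cardsD1 s A) (edge2L _ eL e2); rewrite -/A sA; lia.
rewrite !inE => /andP [ts /and3P [tL /eqP t3 _]].
rewrite alpha0_vertices; apply: leq_trans (card_setU_distinct3 s3 t3 _) _.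
- by rewrite eq_sym.
- by apply: subset_leq_card; rewrite subUset !simplex_sub_vertices.
Qed.

End SimplicialComplex.

Lemma discriminant_bound (n e f chi : Z) :
  (2 * e <= 3 * f)%Z -> (2 * e <= n * (n - 1))%Z -> chi = (n - e + f)%Z ->
  (49 - 24 * chi <= (2 * n - 7) * (2 * n - 7))%Z.
Proof. by move=> ef en ->; nia. Qed.

Section RhoBound.
Local Open Scope R_scope.

(* If 2n >= 7 and (2n - 7)^2 >= 49 - 24k then n >= rho(k): the square root
   is at most 2n - 7, so the ceiling of (7 + sqrt(49 - 24k))/2 is at most n. *)
Lemma rho_le (k n : Z) :
  (7 <= 2 * n)%Z -> (49 - 24 * k <= (2 * n - 7) * (2 * n - 7))%Z -> (rho k <= n)%Z.
Proof.
move=> n_large disc.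
have discR : 49 - 24 * IZR k <= (2 * IZR n - 7) * (2 * IZR n - 7).
  by apply IZR_le in disc; rewrite minus_IZR !mult_IZR minus_IZR mult_IZR in disc.
have n_largeR : 7 <= 2 * IZR n by apply IZR_le in n_large; rewrite mult_IZR in n_large.
have sqrt_le : sqrt (49 - 24 * IZR k) <= 2 * IZR n - 7.
  rewrite -[X in _ <= X](sqrt_square (2 * IZR n - 7)); last lra.
  exact: sqrt_le_1_alt.
rewrite /rho /Int_part.
set r := Ropp ((7 + sqrt (49 - 24 * IZR k)) / 2).
have r_ge : - IZR n <= r by rewrite /r; lra.
have [up_gt _] := archimed r.
suff : (- n < up r)%Z by lia.
by apply: lt_IZR; rewrite opp_IZR; lra.
Qed.

End RhoBound.

Theorem lemma3p2 (T : finType) (L : {set {set T}}) :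
  is_complex L -> dim2 L -> connected_cx L -> edges_in_two_triangles L ->
  (euler_char L <= 2)%Z ->
  (rho (euler_char L) <= Z.of_nat (alpha L 0))%Z /\
  (2 * Z.of_nat (alpha L 0) - 2 * euler_char L <= Z.of_nat (alpha L 2))%Z.
Proof.
move=> cxL dimL _ edge2L _.
have chi_eq := euler_char_dim_le2 (proj1 dimL).
have n_ge4 := four_vertices cxL edge2L dimL.
have e_vs_f := edges_triangles_bound cxL edge2L.
have e_vs_n := edges_vertices_bound cxL.
rewrite chi_eq; split.
- apply: rho_le; first lia.
  apply: (discriminant_bound _ (Z.of_nat (alpha L 1)) (Z.of_nat (alpha L 2))); lia.
- lia.
Qed.
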